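(* Let $L$ be an interval locale and $E$ a presheaf on $L_{+}$. Then the composite morphism $E\to\operatorname{Im}(E)\to L(\operatorname{Im}(E))$ is initial among all presheaf maps $E\to F$ with $F$ a sheaf of monomorphisms on $L_{+}$.
   Context: A locale $L$ is a complete lattice in which finite meets distribute over arbitrary joins, with Grothendieck topology: $\{b_j\le a\}$ covers $a$ iff $\bigvee_j b_j=a$. $L$ is an interval if it is totally ordered and densely ordered. $i$ is the bottom element of $L$; $L_{+}=L\sqcup\{0\}$ with a new bottom $0<i$. A sheaf of monomorphisms on $L_{+}$ is a sheaf $F$ with $F(b)\to F(a)$ injective for all $a\le b$ in $L$. For a presheaf $E$ on $L_{+}$, $\operatorname{Im}(E)(s)$ is the image of $E(s)\to E(i)$ for $s\in L$, $\operatorname{Im}(E)(0)=\ast$. For a presheaf $F$ on $L_{+}$, $LF(a)=\varprojlim_{0<b<a}F(b)$ for $a\in L$, $a\neq i$, $LF(i)=F(i)$, $LF(0)=\ast$; $\eta:F\to LF$ is the canonical map. *)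

From Stdlib Require Import Classical FunctionalExtensionality ProofIrrelevance.
Set Implicit Arguments.
Unset Strict Implicit.

Record locale := Locale {
  car :> Type;
  le : car -> car -> Prop;
  le_refl : forall a, le a a;
  le_trans : forall a b c, le a b -> le b c -> le a c;
  le_antisym : forall a b, le a b -> le b a -> a = b;
  join : forall J : Type, (J -> car) -> car;
  join_ub : forall (J : Type) (b : J -> car) (j : J), le (b j) (join b);
  join_least : forall (J : Type) (b : J -> car) (u : car),
      (forall j, le (b j) u) -> le (join b) u;
  meet : car -> car -> car;
  meet_lb1 : forall a b, le (meet a b) a;
  meet_lb2 : forall a b, le (meet a b) b;
  meet_greatest : forall a b c, le c a -> le c b -> le c (meet a b);
  meet_join_distr : forall (a : car) (J : Type) (b : J -> car),
      meet a (join b) = join (fun j => meet a (b j))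
}.
Arguments le {l} _ _.
Arguments join {l} {J} _.
Arguments meet {l} _ _.

Definition lt {L : locale} (a b : L) : Prop := le a b /\ a <> b.

Definition is_interval (L : locale) : Prop :=
  (forall a b : L, le a b \/ le b a) /\
  (forall a b : L, lt a b -> exists c : L, lt a c /\ lt c b).

Section Plus.
Variable L : locale.

Definition bot : L := @join L Empty_set (fun e => match e with end).

Lemma bot_le (a : L) : le bot a.
Proof. apply join_least. intros []. Qed.

(** [L_+ = L ⊔ {0}]: elements are [option L], with [None] the new bottom [0]. *)
Definition leP (x y : option L) : Prop :=
  match x, y with
  | None, _ => True
  | Some _, None => False
  | Some a, Some b => le a b
  end.

Definition is_joinP (J : Type) (b : J -> option L) (a : option L) : Prop :=
  (forall j, leP (b j) a) /\ (forall u, (forall j, leP (b j) u) -> leP a u).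

Record presheaf := Presheaf {
  ob :> option L -> Type;
  res : forall x y : option L, leP x y -> ob y -> ob x;
  res_id : forall x (h : leP x x) s, res h s = s;
  res_comp : forall x y z (hxy : leP x y) (hyz : leP y z) (hxz : leP x z) s,
      res hxy (res hyz s) = res hxz s
}.

Arguments res p {x y} _ _.
Arguments res_id p {x} _ _.
Arguments res_comp p {x y z} _ _ _ _.
Unset Implicit Arguments.
Record hom (E F : presheaf) := Hom {
  app : forall x, E x -> F x;
  app_nat : forall x y (h : leP x y) (s : E y),
      app x (@res E x y h s) = @res F x y h (app y s)
}.
Set Implicit Arguments.
Arguments app {E F} _ _ _.

Definition comp (E F G : presheaf) (g : hom F G) (f : hom E F) : hom E G.
Proof.
  refine (Hom E G (fun x s => app g x (app f x s)) _).
  intros x y h s. rewrite app_nat, app_nat. reflexivity.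
Defined.

Definition is_sheaf (F : presheaf) : Prop :=
  forall (a : option L) (J : Type) (b : J -> option L)
         (hb : forall j, leP (b j) a),
    is_joinP b a ->
    forall s : forall j, F (b j),
      (forall j k (c : option L) (h1 : leP c (b j)) (h2 : leP c (b k)),
          res F h1 (s j) = res F h2 (s k)) ->
      exists t : F a, (forall j, res F (hb j) t = s j) /\
        forall t' : F a, (forall j, res F (hb j) t' = s j) -> t' = t.

Definition is_mono_sheaf (F : presheaf) : Prop :=
  is_sheaf F /\
  forall (a b : L) (h : le a b) (s t : F (Some b)),
    res F (x := Some a) (y := Some b) h s = res F (x := Some a) (y := Some b) h t ->
    s = t.

Lemma subset_eq (A : Type) (P : A -> Prop) (u v : sig P) :
  proj1_sig u = proj1_sig v -> u = v.
Proof.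
  destruct u as [u pu], v as [v pv]; simpl; intros ->.
  f_equal; apply proof_irrelevance.
Qed.

Section Image.
Variable E : presheaf.

Definition im_ob (x : option L) : Type :=
  match x with
  | None => unit
  | Some s => {y : E (Some bot) |
                exists z : E (Some s),
                  res E (x := Some bot) (y := Some s) (bot_le s) z = y}
  end.

Lemma im_res_lemma (a b : L) (h : le a b) (s : im_ob (Some b)) :
  exists z : E (Some a),
    res E (x := Some bot) (y := Some a) (bot_le a) z = proj1_sig s.
Proof.
  destruct s as [y [z Hz]]; simpl.
  exists (res E (x := Some a) (y := Some b) h z).
  rewrite (res_comp E (x := Some bot) (y := Some a) (z := Some b) (bot_le a) h (bot_le b)).
  exact Hz.
Qed.

Definition im_res (x y : option L) : leP x y -> im_ob y -> im_ob x :=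
  match x as x0, y as y0 return leP x0 y0 -> im_ob y0 -> im_ob x0 with
  | None, _ => fun _ _ => tt
  | Some a, None => fun h _ => False_rect _ h
  | Some a, Some b => fun h s => exist _ (proj1_sig s) (im_res_lemma h s)
  end.

Definition Im : presheaf.
Proof.
  refine (@Presheaf im_ob im_res _ _).
  - intros [a|] h s; simpl.
    + apply subset_eq; reflexivity.
    + destruct s; reflexivity.
  - intros [a|] [b|] [c|] hxy hyz hxz s; simpl in *;
      try contradiction; try reflexivity.
    apply subset_eq; reflexivity.
Defined.

Definition quot_app (x : option L) : E x -> Im x :=
  match x as x0 return E x0 -> im_ob x0 with
  | None => fun _ => tt
  | Some a => fun s =>
      exist _ (res E (x := Some bot) (y := Some a) (bot_le a) s)
            (ex_intro _ s eq_refl)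
  end.

Definition quot : hom E Im.
Proof.
  refine (@Hom E Im quot_app _).
  intros [a|] [b|] h s; simpl in *; try contradiction; try reflexivity.
  apply subset_eq; simpl.
  apply res_comp.
Defined.
End Image.

(** For [a ∈ L], [LF(a)] is the limit of the
    [F(b)] over the index set [{b | b < a or b = i}]: for [a ≠ i] this is
    [{b | 0 < b < a}], and for [a = i] it is [{i}], whose limit is
    (canonically isomorphic to) [F(i)].  [LF(0) = *]. *)
Section Lim.
Variable F : presheaf.

Definition LP (a b : L) : Prop := lt b a \/ b = bot.

Lemma LP_le (a b : L) : LP a b -> le b a.
Proof. intros [[H _] | ->]; [exact H | apply bot_le]. Qed.

Lemma LP_mono (a a' b : L) : le a a' -> LP a b -> LP a' b.
Proof.
  intros h [[H1 H2] | H]; [left | right; exact H].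
  split; [exact (le_trans H1 h) |].
  intros ->; apply H2, le_antisym; assumption.
Qed.

Definition lim_ob (x : option L) : Type :=
  match x with
  | None => unit
  | Some a =>
      {f : forall b : L, LP a b -> F (Some b) |
        forall (b c : L) (hb : LP a b) (hc : LP a c) (hbc : le b c),
          res F (x := Some b) (y := Some c) hbc (f c hc) = f b hb}
  end.

Lemma lim_res_lemma (a a' : L) (h : le a a') (s : lim_ob (Some a')) :
  forall (b c : L) (hb : LP a b) (hc : LP a c) (hbc : le b c),
    res F (x := Some b) (y := Some c) hbc (proj1_sig s c (LP_mono h hc))
    = proj1_sig s b (LP_mono h hb).
Proof. destruct s as [f Hf]; simpl; intros; apply Hf. Qed.

Definition lim_res (x y : option L) : leP x y -> lim_ob y -> lim_ob x :=
  match x as x0, y as y0 return leP x0 y0 -> lim_ob y0 -> lim_ob x0 with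
  | None, _ => fun _ _ => tt
  | Some a, None => fun h _ => False_rect _ h
  | Some a, Some a' => fun h s =>
      exist _ (fun b hb => proj1_sig s b (LP_mono h hb)) (lim_res_lemma h s)
  end.

Definition Lim : presheaf.
Proof.
  refine (@Presheaf lim_ob lim_res _ _).
  - intros [a|] h s; simpl.
    + apply subset_eq; simpl.
      apply functional_extensionality_dep; intro b.
      apply functional_extensionality_dep; intro hb.
      f_equal; apply proof_irrelevance.
    + destruct s; reflexivity.
  - intros [a|] [b|] [c|] hxy hyz hxz s; simpl in *;
      try contradiction; try reflexivity.
    apply subset_eq; simpl.
    apply functional_extensionality_dep; intro d.
    apply functional_extensionality_dep; intro hd.
    f_equal; apply proof_irrelevance.
Defined.

Lemma eta_lemma (a : L) (s : F (Some a)) :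
  forall (b c : L) (hb : LP a b) (hc : LP a c) (hbc : le b c),
    res F (x := Some b) (y := Some c) hbc
        (res F (x := Some c) (y := Some a) (LP_le hc) s)
    = res F (x := Some b) (y := Some a) (LP_le hb) s.
Proof. intros; apply res_comp. Qed.

Definition eta_app (x : option L) : F x -> Lim x :=
  match x as x0 return F x0 -> lim_ob x0 with
  | None => fun _ => tt
  | Some a => fun s =>
      exist _ (fun b hb => res F (x := Some b) (y := Some a) (LP_le hb) s)
            (eta_lemma s)
  end.

Definition eta : hom F Lim.
Proof.
  refine (@Hom F Lim eta_app _).
  intros [a|] [b|] h s; simpl in *; try contradiction; try reflexivity.
  apply subset_eq; simpl.
  apply functional_extensionality_dep; intro c.
  apply functional_extensionality_dep; intro hc.
  rewrite (res_comp F (x := Some c) (y := Some a) (z := Some b) (LP_le hc) h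
             (LP_le (LP_mono h hc))).
  reflexivity.
Defined.
End Lim.

End Plus.
Arguments hom {L} E F.
Arguments app {L E F} _ _ _.
Arguments res {L} p {x y} _ _.


Definition unit_map {L : locale} (E : presheaf L) : hom E (Lim (Im E)) :=
  comp (eta (Im E)) (quot E).

(** The sections of [L(Im E)] over [a] are the elements [y] of [E(i)] that
    lift to [E(b)] for every [b < a]: everything is determined at the bottom
    [i].  Gluing such values only needs totality: if [⋁ b_j = a] and [b < a],
    some [b_j] lies above [b].  Conversely, in a sheaf of monomorphisms [F] an
    element of [F(i)] that lifts below every [b < a] lifts to [F(a)], because
    density makes [{b | b < a} ∪ {i}] a cover of [a] and the lifts are
    compatible by injectivity of restriction to [i].  Applied to the image of
    [y] under [f : E -> F], this defines the unique factorization. *)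
From Stdlib Require Import Classical FunctionalExtensionality ProofIrrelevance
  IndefiniteDescription.
Set Implicit Arguments.

Notation res_bot F a := (@res _ F (Some (bot _)) (Some a) (bot_le a)).

Section Plus.
Variable L : locale.

Lemma res_bot_res (F : presheaf L) (c d : L) (h : leP (Some c) (Some d))
    (s : F (Some d)) :
  res_bot F c (res F h s) = res_bot F d s.
Proof. apply res_comp. Qed.

Lemma leP_bot_of_not_leP {x y : option L} : ~ leP x y -> leP (Some (bot L)) x.
Proof. destruct x as [a|]; intro H; [apply bot_le | contradiction H; exact I]. Qed.

Lemma lt_not_le {a b : L} : lt b a -> ~ le a b.
Proof. intros [Hba Hne] Hab; apply Hne, le_antisym; assumption. Qed.

Lemma not_le_lt (Htot : forall a b : L, le a b \/ le b a) {b c : L} :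
  ~ le c b -> lt b c.
Proof.
  intro Hcb; destruct (Htot b c) as [Hbc|]; [|contradiction].
  split; [exact Hbc | intros ->; apply Hcb, le_refl].
Qed.

Lemma join_not_le (J : Type) (bj : J -> option L) {x y : option L} :
  is_joinP bj x -> ~ leP x y -> exists j, ~ leP (bj j) y.
Proof.
  intros [_ Hleast] Hxy; apply NNPP; intro Hall.
  apply Hxy, Hleast; intro j.
  apply NNPP; intro Hj; apply Hall; exists j; exact Hj.
Qed.

Lemma interval_join_LP (HL : is_interval L) (a : L) :
  is_joinP (fun j : {b : L | LP a b} => Some (proj1_sig j)) (Some a).
Proof.
  destruct HL as [Htot Hdense]; split; [intros [b hb]; exact (LP_le hb)|].
  intros [u|] Hu; simpl.
  - destruct (Htot a u) as [Hau|Hua]; [exact Hau|].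
    destruct (classic (u = a)) as [->|Hne]; [apply le_refl|].
    destruct (Hdense u a (conj Hua Hne)) as [c [Huc Hca]].
    exfalso; apply (lt_not_le Huc).
    exact (Hu (exist _ c (or_introl Hca))).
  - exact (Hu (exist _ (bot L) (or_intror eq_refl))).
Qed.

(* [0] is covered by the empty family. *)
Lemma sheaf_None_contr (F : presheaf L) :
  is_sheaf F -> exists t : F None, forall t', t' = t.
Proof.
  intro HF.
  destruct (HF None Empty_set (fun e => match e with end) (fun e => match e with end))
    with (s := fun e : Empty_set => match e return F match e with end with end)
    as [t [_ Ht]].
  - split; [intros [] | intros u _; exact I].
  - intros [].
  - exists t; intro t'; apply Ht; intros [].
Qed.

Lemma sheaf_None_eq (F : presheaf L) : is_sheaf F -> forall s t : F None, s = t.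
Proof.
  intros HF s t; destruct (sheaf_None_contr HF) as [u Hu].
  rewrite (Hu s), (Hu t); reflexivity.
Qed.

Lemma Lim_None_eq (F : presheaf L) (u v : Lim F None) : u = v.
Proof. destruct u, v; reflexivity. Qed.

Lemma mono_sheaf_lift (HL : is_interval L) (F : presheaf L) (HF : is_mono_sheaf F)
    (a : L) (w : F (Some (bot L))) :
  (forall b, lt b a -> exists z : F (Some b), res_bot F b z = w) ->
  exists t : F (Some a), res_bot F a t = w.
Proof.
  intro Hw; destruct HF as [Hsheaf Hmono].
  pose (bj := fun j : {b : L | LP a b} => Some (proj1_sig j)).
  assert (lifts : forall j, exists z : F (bj j), res_bot F (proj1_sig j) z = w).
  { intros [b [hlt | ->]]; [exact (Hw b hlt) | exists w; apply res_id]. }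
  pose (s := fun j => proj1_sig (constructive_indefinite_description _ (lifts j))).
  assert (Hs : forall j, res F (x := Some (bot L)) (y := bj j) (bot_le _) (s j) = w)
    by (intro j; exact (proj2_sig (constructive_indefinite_description _ (lifts j)))).
  destruct (Hsheaf (Some a) _ bj (fun j => LP_le (proj2_sig j))
              (interval_join_LP HL a) s) as [t [Ht _]].
  - intros j k [c|] hj hk; [|apply (sheaf_None_eq Hsheaf)].
    apply (Hmono (bot L) c (bot_le c)).
    rewrite (res_comp (p := F) (x := Some (bot L)) (y := Some c) (z := bj j) (bot_le c) hj (bot_le _)),
      (res_comp (p := F) (x := Some (bot L)) (y := Some c) (z := bj k) (bot_le c) hk (bot_le _)), !Hs.
    reflexivity.
  - pose (j0 := exist (LP a) (bot L) (or_intror eq_refl)).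
    exists t; rewrite <- (Hs j0), res_id, <- (Ht j0).
    f_equal; apply proof_irrelevance.
Qed.

Section LimIm.
Variable E : presheaf L.

Definition lim_val (a : L) (s : Lim (Im E) (Some a)) : E (Some (bot L)) :=
  proj1_sig (proj1_sig s (bot L) (or_intror eq_refl)).

Lemma lim_val_spec (a : L) (s : Lim (Im E) (Some a)) (b : L) (hb : LP a b) :
  proj1_sig (proj1_sig s b hb) = lim_val s.
Proof.
  destruct s as [fs Hs]; unfold lim_val; simpl.
  rewrite <- (Hs (bot L) b (or_intror eq_refl) hb (bot_le b)); reflexivity.
Qed.

Lemma lim_val_res {a a' : L} (h : leP (Some a) (Some a')) (s : Lim (Im E) (Some a')) :
  lim_val (res (Lim (Im E)) h s) = lim_val s.
Proof. unfold lim_val at 1; simpl; apply lim_val_spec. Qed.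

Lemma lim_val_image (a : L) (s : Lim (Im E) (Some a)) (b : L) :
  lt b a -> exists z : E (Some b), res_bot E b z = lim_val s.
Proof.
  intro hba; destruct (proj2_sig (proj1_sig s b (or_introl hba))) as [z Hz].
  exists z; rewrite Hz; apply lim_val_spec.
Qed.

Lemma lim_val_inj (a : L) (u v : Lim (Im E) (Some a)) : lim_val u = lim_val v -> u = v.
Proof.
  intro Huv; apply subset_eq.
  apply functional_extensionality_dep; intro b.
  apply functional_extensionality_dep; intro hb.
  apply subset_eq; rewrite !lim_val_spec; exact Huv.
Qed.

Lemma lim_ext (x : option L) (u v : Lim (Im E) x) :
  (forall h : leP (Some (bot L)) x,
      lim_val (res (Lim (Im E)) (x := Some (bot L)) h u) =
      lim_val (res (Lim (Im E)) (x := Some (bot L)) h v)) -> u = v.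
Proof.
  destruct x as [a|]; intro H; [|apply Lim_None_eq].
  apply lim_val_inj; specialize (H (bot_le a)); rewrite !lim_val_res in H; exact H.
Qed.

Lemma lim_val_image_not_le (Htot : forall a b : L, le a b \/ le b a)
    {x : option L} (u : Lim (Im E) x) (h : leP (Some (bot L)) x) {b : L} :
  ~ leP x (Some b) ->
  exists z : E (Some b), res_bot E b z = lim_val (res (Lim (Im E)) h u).
Proof.
  destruct x as [c|]; [|contradiction].
  intro Hcb; rewrite lim_val_res; exact (lim_val_image u (not_le_lt Htot Hcb)).
Qed.

Section LimOfVal.
Variables (a : L) (y : E (Some (bot L))).
Hypothesis Hy : forall b, lt b a -> exists z : E (Some b), res_bot E b z = y.

Lemma LP_image (b : L) : LP a b -> exists z : E (Some b), res_bot E b z = y.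
Proof. intros [hba | ->]; [exact (Hy hba) | exists y; apply res_id]. Qed.

Definition lim_of_val : Lim (Im E) (Some a).
Proof.
  refine (exist _ (fun b hb => exist _ y (LP_image hb)) _).
  intros; apply subset_eq; reflexivity.
Defined.

Lemma lim_val_of_val : lim_val lim_of_val = y.
Proof. reflexivity. Qed.

End LimOfVal.

Lemma lim_res_bot_unit (a : L) (s : Lim (Im E) (Some a)) :
  res_bot (Lim (Im E)) a s = app (unit_map E) (Some (bot L)) (lim_val s).
Proof.
  apply lim_val_inj; rewrite lim_val_res; symmetry; apply res_id.
Qed.

Lemma Lim_Im_res_inj (a b : L) (h : le a b) (s t : Lim (Im E) (Some b)) :
  res (Lim (Im E)) (x := Some a) (y := Some b) h s =
  res (Lim (Im E)) (x := Some a) (y := Some b) h t -> s = t.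
Proof.
  intro Hst; apply lim_val_inj.
  rewrite <- (lim_val_res h s), <- (lim_val_res h t), Hst; reflexivity.
Qed.

Lemma Lim_Im_sheaf (Htot : forall a b : L, le a b \/ le b a) : is_sheaf (Lim (Im E)).
Proof.
  intros [a|] J bj hb Hjoin s Hcompat.
  2: { exists tt; split; [|intros [] _; reflexivity].
       intro j; generalize (hb j) (s j); clear; destruct (bj j); intros h u;
         [contradiction | apply Lim_None_eq]. }
  (* [Some a] is not below [0], so some [b_j] differs from [0]. *)
  destruct (join_not_le Hjoin (y := None) (fun h => h)) as [j0 Hj0].
  set (h0 := leP_bot_of_not_leP Hj0).
  set (y := lim_val (res (Lim (Im E)) (x := Some (bot L)) h0 (s j0))).
  assert (common : forall j (h : leP (Some (bot L)) (bj j)),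
             lim_val (res (Lim (Im E)) h (s j)) = y).
  { intros j h; unfold y; rewrite (Hcompat j j0 _ h h0); reflexivity. }
  assert (image : forall b, lt b a -> exists z : E (Some b), res_bot E b z = y).
  { intros b hba.
    destruct (join_not_le Hjoin (y := Some b) (lt_not_le hba)) as [j Hj].
    rewrite <- (common j (leP_bot_of_not_leP Hj)).
    exact (lim_val_image_not_le Htot (s j) _ Hj). }
  exists (lim_of_val image); split.
  - intro j; apply lim_ext; intro h.
    rewrite (res_comp h (hb j) (bot_le a)), lim_val_res, common; reflexivity.
  - intros t' Ht'; apply lim_ext; intro h.
    rewrite !lim_val_res, lim_val_of_val, <- (common j0 h0), <- (Ht' j0).
    rewrite (res_comp h0 (hb j0) h), lim_val_res; reflexivity.
Qed.

Lemma Lim_Im_mono_sheaf (Htot : forall a b : L, le a b \/ le b a) :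
  is_mono_sheaf (Lim (Im E)).
Proof. split; [exact (Lim_Im_sheaf Htot) | exact Lim_Im_res_inj]. Qed.

End LimIm.

Section Factor.
Hypothesis HL : is_interval L.
Variables E F : presheaf L.
Hypothesis HF : is_mono_sheaf F.
Variable f : hom E F.

Lemma factor_exists (a : L) (s : Lim (Im E) (Some a)) :
  exists t : F (Some a), res_bot F a t = app f _ (lim_val s).
Proof.
  apply (mono_sheaf_lift HL HF); intros b hba.
  destruct (lim_val_image s hba) as [z Hz].
  exists (app f _ z); rewrite <- app_nat, Hz; reflexivity.
Qed.

Definition factor_at (a : L) (s : Lim (Im E) (Some a)) : F (Some a) :=
  proj1_sig (constructive_indefinite_description _ (factor_exists s)).

Lemma factor_at_spec (a : L) (s : Lim (Im E) (Some a)) :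
  res_bot F a (factor_at s) = app f _ (lim_val s).
Proof. exact (proj2_sig (constructive_indefinite_description _ (factor_exists s))). Qed.

Definition factor_None : F None :=
  proj1_sig (constructive_indefinite_description _ (sheaf_None_contr (proj1 HF))).

Definition factor_app (x : option L) : Lim (Im E) x -> F x :=
  match x with
  | None => fun _ => factor_None
  | Some a => @factor_at a
  end.

Lemma res_bot_inj (a : L) (s t : F (Some a)) : res_bot F a s = res_bot F a t -> s = t.
Proof. apply (proj2 HF). Qed.

Lemma factor_nat (x y : option L) (h : leP x y) (s : Lim (Im E) y) :
  factor_app x (res (Lim (Im E)) h s) = res F h (factor_app y s).
Proof.
  destruct x as [a|], y as [a'|]; try contradiction; try apply (sheaf_None_eq (proj1 HF)).
  apply res_bot_inj; cbn [factor_app].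
  rewrite res_bot_res, !factor_at_spec, lim_val_res; reflexivity.
Qed.

Definition factor : hom (Lim (Im E)) F := @Hom L _ _ factor_app factor_nat.

Lemma factor_unit (x : option L) (e : E x) :
  app factor x (app (unit_map E) x e) = app f x e.
Proof.
  destruct x as [a|]; [|apply (sheaf_None_eq (proj1 HF))].
  apply res_bot_inj; cbn [app factor factor_app]; rewrite factor_at_spec.
  rewrite <- app_nat; reflexivity.
Qed.

Lemma factor_unique (g : hom (Lim (Im E)) F) :
  (forall x e, app g x (app (unit_map E) x e) = app f x e) ->
  forall x s, app g x s = app factor x s.
Proof.
  intros Hg [a|] s; [|apply (sheaf_None_eq (proj1 HF))].
  apply res_bot_inj; cbn [app factor factor_app]; rewrite factor_at_spec, <- app_nat.
  rewrite lim_res_bot_unit; apply Hg.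
Qed.

End Factor.
End Plus.

Theorem corollary27 (L : locale) (HL : is_interval L) (E : presheaf L) :
  is_mono_sheaf (Lim (Im E)) /\
  forall (F : presheaf L), is_mono_sheaf F ->
  forall f : hom E F,
    exists g : hom (Lim (Im E)) F,
      (forall x s, app g x (app (unit_map E) x s) = app f x s) /\
      (forall g' : hom (Lim (Im E)) F,
          (forall x s, app g' x (app (unit_map E) x s) = app f x s) ->
          forall x s, app g' x s = app g x s).
Proof.
  split; [exact (Lim_Im_mono_sheaf E (proj1 HL))|].
  intros F HF f; exists (factor HL HF f); split.
  - apply factor_unit.
  - apply factor_unique.
Qed.
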